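(* Let $K$ be a finite field, $G$ a finite group of order $m$ with a fixed ordering of its elements, $\varphi:KG\to K^m$ the associated coordinate isomorphism, and $KG=\mathcal{B}_0\oplus\cdots\oplus\mathcal{B}_s$ the block decomposition with $\mathcal{B}_i=f_iKG$. For each $i$ let $\pi_i:\mathcal{B}_i\to K^m$ be the restriction of $\varphi$ to $\mathcal{B}_i$. Let $\ell\ge1$, let $\mathcal{C}$ be a right $KG$-submodule of $KG^\ell$, identified with a linear code in $K^{m\ell}$ via $\varphi^\ell$, and let $\mathcal{C}_i=\mathcal{C}f_i\subseteq\mathcal{B}_i^\ell$. (a) Then $$\mathcal{C}=(\mathcal{B}_0\,\Box_{\pi_0}\,\mathcal{C}_0)\oplus\cdots\oplus(\mathcal{B}_s\,\Box_{\pi_s}\,\mathcal{C}_s),$$ where each $\mathcal{C}_i$ is a (possibly zero) linear code of length $\ell$ over the ring $\mathcal{B}_i$. (b) Suppose the blocks are ordered so that $\mathrm{d}(\mathcal{B}_0)\le\cdots\le\mathrm{d}(\mathcal{B}_s)$ and $\mathcal{C}\neq0$. Then $$\mathrm{d}(\mathcal{C})\ \ge\ \min_{0\le i\le s}\bigl\{\mathrm{d}(\mathcal{C}_i)\cdot \mathrm{d}(\mathcal{B}_0\oplus\cdots\oplus\mathcal{B}_i)\bigr\},$$ with the convention $\mathrm{d}(\mathcal{C}_i)=\infty$ if $\mathcal{C}_i=0$.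
   Context: For a ring $\mathcal{B}_i$, a $K$-linear injection $\pi_i:\mathcal{B}_i\to K^m$ and a subset $\mathcal{C}_i\subseteq\mathcal{B}_i^\ell$, the concatenated code is $\mathcal{B}_i\,\Box_{\pi_i}\,\mathcal{C}_i=\{(\pi_i(c_1),\ldots,\pi_i(c_\ell)) : (c_1,\ldots,c_\ell)\in\mathcal{C}_i\}\subseteq K^{m\ell}$. The Hamming weight of $v\in K^N$ is the number of nonzero coordinates; the minimum distance $\mathrm{d}$ of a $K$-subspace of $K^N$ (or of a subspace of $KG$, via $\varphi$) is the minimum weight of its nonzero elements. For a code $\mathcal{C}_i\subseteq\mathcal{B}_i^\ell$, $\mathrm{d}(\mathcal{C}_i)$ is the minimum, over nonzero $(c_1,\ldots,c_\ell)\in\mathcal{C}_i$, of the number of indices $j$ with $c_j\ne0$. The blocks $\mathcal{B}_i=f_iKG$ come from the primitive pairwise orthogonal central idempotents $f_0,\ldots,f_s$ of $KG$ with $\sum f_i=1$; $\mathcal{B}_0\oplus\cdots\oplus\mathcal{B}_i$ is regarded as a $K$-subspace of $KG\cong K^m$. *)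

From HB Require Import structures.
From mathcomp Require Import all_boot all_order all_algebra all_fingroup.
Set Implicit Arguments. Unset Strict Implicit. Unset Printing Implicit Defensive.
Import GRing.Theory.
Local Open Scope ring_scope.

(* The group algebra KG, represented through its coordinates:
   a = \sum_g a(g) g  is stored as the function g |-> a(g).  This is the
   coordinate isomorphism phi : KG -> K^m (up to the fixed ordering of G,
   which is irrelevant for Hamming weights). The additive structure is the
   pointwise one; the multiplication is the group-algebra (convolution)
   product [gamul], NOT the pointwise product of {ffun}. *)
Definition KG (K : finFieldType) (gT : finGroupType) := {ffun gT -> K}.

Definition gamul (K : finFieldType) (gT : finGroupType) (a b : KG K gT) : KG K gT :=
  [ffun g => \sum_(h : gT) a h * b (h^-1 * g)%g].

Definition gaone (K : finFieldType) (gT : finGroupType) : KG K gT :=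
  [ffun g => (g == 1%g)%:R].

Definition central (K : finFieldType) (gT : finGroupType) (e : KG K gT) :=
  forall a : KG K gT, gamul e a = gamul a e.

Definition idem (K : finFieldType) (gT : finGroupType) (e : KG K gT) :=
  gamul e e = e.

Definition primitive_central_idem (K : finFieldType) (gT : finGroupType)
  (e : KG K gT) :=
  [/\ e != 0, central e, idem e &
   forall e1 e2 : KG K gT, central e1 -> idem e1 -> central e2 -> idem e2 ->
     gamul e1 e2 = 0 -> e1 + e2 = e -> e1 = 0 \/ e2 = 0].

Definition wt (K : finFieldType) (gT : finGroupType) (a : KG K gT) : nat :=
  #|[set g | a g != 0]|.

Definition wtl (K : finFieldType) (gT : finGroupType) (l : nat)
  (c : {ffun 'I_l -> KG K gT}) : nat := (\sum_(j < l) wt (c j))%N.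

(* number of nonzero entries of c in B^l (weight for codes over the ring B_i) *)
Definition rwt (K : finFieldType) (gT : finGroupType) (l : nat)
  (c : {ffun 'I_l -> KG K gT}) : nat := #|[set j | c j != 0]|.

(* minimum of w over the nonzero elements of A; the default value
   (used only when A has no nonzero element) is irrelevant. *)
Definition mind (T : finType) (z : T) (w : T -> nat) (A : {set T}) : nat :=
  \big[minn/ (\max_(x in A) w x)%N]_(x in A | x != z) w x.

Definition block (K : finFieldType) (gT : finGroupType) (s : nat)
  (f : 'I_s.+1 -> KG K gT) (i : 'I_s.+1) : {set KG K gT} :=
  [set gamul (f i) a | a : KG K gT].

Definition blocksum (K : finFieldType) (gT : finGroupType) (s : nat)
  (f : 'I_s.+1 -> KG K gT) (i : 'I_s.+1) : {set KG K gT} :=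
  [set (\sum_(j < s.+1 | (j <= i)%N) gamul (f j) (a j))
     | a : {ffun 'I_s.+1 -> KG K gT}].

Definition rmul (K : finFieldType) (gT : finGroupType) (l : nat)
  (c : {ffun 'I_l -> KG K gT}) (r : KG K gT) : {ffun 'I_l -> KG K gT} :=
  [ffun j => gamul (c j) r].

Definition rsubmod (K : finFieldType) (gT : finGroupType) (l : nat)
  (C : {set {ffun 'I_l -> KG K gT}}) :=
  [/\ 0 \in C,
      forall x y, x \in C -> y \in C -> x + y \in C &
      forall x r, x \in C -> rmul x r \in C].

Definition compC (K : finFieldType) (gT : finGroupType) (l s : nat)
  (f : 'I_s.+1 -> KG K gT) (C : {set {ffun 'I_l -> KG K gT}}) (i : 'I_s.+1)
  : {set {ffun 'I_l -> KG K gT}} :=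
  [set rmul c (f i) | c in C].

(* concatenated code B_i \Box_{pi_i} C_i as a subset of K^{ml}, i.e. the image
   of C_i under pi_i^l; pi_i is the restriction of phi, which is the identity
   in our coordinate representation. *)
Definition concat (K : finFieldType) (gT : finGroupType) (l : nat)
  (Ci : {set {ffun 'I_l -> KG K gT}}) : {set {ffun 'I_l -> KG K gT}} :=
  [set [ffun j => (c : {ffun 'I_l -> KG K gT}) j] | c in Ci].

From HB Require Import structures.
From mathcomp Require Import all_boot all_order all_algebra all_fingroup.
From Stdlib Require Import FunctionalExtensionality.
Set Implicit Arguments.
Unset Strict Implicit.
Unset Printing Implicit Defensive.

Import GRing.Theory.
Local Open Scope ring_scope.

(* Right multiplication by the complete family of orthogonal central
   idempotents f_0, ..., f_s splits every c in KG^l uniquely as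
   c = c f_0 + ... + c f_s with c f_i in C f_i, which is (a).  For (b), let i be
   the largest index with c f_i <> 0.  Then c = c (f_0 + ... + f_i), so every
   entry of c lies in B_0 + ... + B_i, and every entry of c that survives
   multiplication by f_i is nonzero.  Hence at least d(C_i) entries of c are
   nonzero, each of weight at least d(B_0 + ... + B_i). *)

Section GroupAlgebra.

Variables (K : finFieldType) (gT : finGroupType).
Implicit Types a b c : KG K gT.

Lemma gamulE a b g : gamul a b g = \sum_(h : gT) a h * b (h^-1 * g)%g.
Proof. by rewrite ffunE. Qed.

Lemma gamul0l b : gamul 0 b = 0.
Proof. by apply/ffunP=> g; rewrite gamulE ffunE big1 // => h _; rewrite ffunE mul0r. Qed.

Lemma gamul0r a : gamul a 0 = 0.
Proof. by apply/ffunP=> g; rewrite gamulE ffunE big1 // => h _; rewrite ffunE mulr0. Qed.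

Lemma gamulDl a b c : gamul (a + b) c = gamul a c + gamul b c.
Proof.
apply/ffunP=> g; rewrite gamulE [in RHS]ffunE !gamulE -big_split.
by apply: eq_bigr => h _; rewrite ffunE mulrDl.
Qed.

Lemma gamulDr a b c : gamul a (b + c) = gamul a b + gamul a c.
Proof.
apply/ffunP=> g; rewrite gamulE [in RHS]ffunE !gamulE -big_split.
by apply: eq_bigr => h _; rewrite ffunE mulrDr.
Qed.

Lemma gamul_suml (I : finType) (P : pred I) (F : I -> KG K gT) b :
  gamul (\sum_(i | P i) F i) b = \sum_(i | P i) gamul (F i) b.
Proof. exact: (big_morph _ (fun x y : KG K gT => gamulDl x y b) (gamul0l b)). Qed.

Lemma gamul_sumr (I : finType) (P : pred I) (F : I -> KG K gT) a :
  gamul a (\sum_(i | P i) F i) = \sum_(i | P i) gamul a (F i).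
Proof. exact: (big_morph _ (gamulDr a) (gamul0r a)). Qed.

Lemma gamul1r a : gamul a (gaone K gT) = a.
Proof.
apply/ffunP=> g; rewrite gamulE (bigD1 g) //= ffunE mulVg eqxx mulr1 big1 ?addr0 //.
by move=> h hg; rewrite ffunE -eq_mulVg1 (negbTE hg) mulr0.
Qed.

Lemma gamulA a b c : gamul (gamul a b) c = gamul a (gamul b c).
Proof.
apply/ffunP=> g; rewrite !gamulE.
under eq_bigr => h _ do rewrite gamulE mulr_suml.
rewrite exchange_big /=; apply: eq_bigr => k _.
rewrite gamulE mulr_sumr (reindex_inj (mulgI k)) /=.
by apply: eq_bigr => h _; rewrite mulKg mulrA invMg -mulgA.
Qed.

End GroupAlgebra.

Section RightMultiplication.

Variables (K : finFieldType) (gT : finGroupType) (l : nat).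
Local Notation KGl := {ffun 'I_l -> KG K gT}.
Implicit Types (x y : KGl) (a b : KG K gT).

Lemma rmul0l a : rmul (0 : KGl) a = 0.
Proof. by apply/ffunP=> j; rewrite !ffunE gamul0l. Qed.

Lemma rmul0r x : rmul x 0 = 0.
Proof. by apply/ffunP=> j; rewrite !ffunE gamul0r. Qed.

Lemma rmulDl x y a : rmul (x + y) a = rmul x a + rmul y a.
Proof. by apply/ffunP=> j; rewrite !ffunE gamulDl. Qed.

Lemma rmulA x a b : rmul (rmul x a) b = rmul x (gamul a b).
Proof. by apply/ffunP=> j; rewrite !ffunE gamulA. Qed.

Lemma rmul1 x : rmul x (gaone K gT) = x.
Proof. by apply/ffunP=> j; rewrite ffunE gamul1r. Qed.

Lemma rmul_suml (I : finType) (P : pred I) (F : I -> KGl) a :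
  rmul (\sum_(i | P i) F i) a = \sum_(i | P i) rmul (F i) a.
Proof. exact: (big_morph _ (fun x y : KGl => rmulDl x y a) (rmul0l a)). Qed.

Lemma rmul_sumr (I : finType) (P : pred I) (F : I -> KG K gT) x :
  rmul x (\sum_(i | P i) F i) = \sum_(i | P i) rmul x (F i).
Proof.
apply/ffunP=> j; rewrite ffunE sum_ffunE gamul_sumr.
by apply: eq_bigr => i _; rewrite ffunE.
Qed.

Lemma concat_id (X : {set KGl}) : concat X = X.
Proof.
rewrite /concat -[RHS]imset_id; apply: eq_imset => c.
by apply/ffunP=> j; rewrite ffunE.
Qed.

Lemma rsubmod_sum (C : {set KGl}) (I : finType) (P : pred I)
    (F : I -> KGl) :
  rsubmod C -> (forall i, P i -> F i \in C) -> \sum_(i | P i) F i \in C.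
Proof. by case=> C0 CD _ CF; apply: (big_ind (fun v => v \in C)). Qed.

Lemma rsubmod_nonzero (C : {set KGl}) :
  rsubmod C -> C != [set 0 : KGl] -> exists2 c, c \in C & c != 0.
Proof.
case=> C0 _ _ CN0; have /set0Pn[c] : C :\ (0 : KGl) != set0.
  apply: contraNneq CN0 => /eqP; rewrite setD_eq0 => sC0.
  by rewrite eqEsubset sC0 sub1set C0.
by rewrite in_setD1 => /andP[c0 Cc]; exists c.
Qed.

Lemma rwt_mul_le_wtl (d : nat) (c c' : KGl) :
  (forall j, c' j != 0 -> (d <= wt (c j))%N) -> (rwt c' * d <= wtl c)%N.
Proof.
move=> wt_c; rewrite /wtl (bigID (fun j => c' j != 0)) /= -sum_nat_const.
apply: leq_trans (leq_addr _ _); rewrite (eq_bigl (fun j => c' j != 0)).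
  exact: leq_sum.
by move=> j; rewrite inE.
Qed.

End RightMultiplication.

Lemma bigminn_le (I : finType) (P : pred I) (F : I -> nat) d j :
  P j -> (\big[minn/d]_(i | P i) F i <= F j)%N.
Proof. exact: (@Order.TotalTheory.bigmin_le_cond _ nat I d j P F). Qed.

Section MinimumWeight.

Variables (T : finType) (z : T) (w : T -> nat) (A : {set T}).

Lemma mind_le x : x \in A -> x != z -> (mind z w A <= w x)%N.
Proof. by move=> xA xz; apply: bigminn_le; rewrite xA xz. Qed.

Lemma le_mind n x0 : x0 \in A -> x0 != z ->
  (forall x, x \in A -> x != z -> n <= w x)%N -> (n <= mind z w A)%N.
Proof.
move=> x0A x0z w_ge; apply: (big_ind (fun v => n <= v)%N).
- by apply: leq_trans (w_ge _ x0A x0z) _; rewrite (bigD1 x0) //= leq_maxl.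
- by move=> u v nu nv; rewrite leq_min nu nv.
- by move=> x /andP[]; apply: w_ge.
Qed.

End MinimumWeight.

Section BlockDecomposition.

Variables (K : finFieldType) (gT : finGroupType) (s l : nat).
Variable f : 'I_s.+1 -> KG K gT.
Hypothesis f_central : forall i, central (f i).
Hypothesis f_idem : forall i, idem (f i).
Hypothesis f_orth : forall i j, i != j -> gamul (f i) (f j) = 0.
Hypothesis f_sum : \sum_(i < s.+1) f i = gaone K gT.

Local Notation KGl := {ffun 'I_l -> KG K gT}.

Variable C : {set KGl}.
Hypothesis C_submod : rsubmod C.

Lemma rmul_idem_proj i k (x : KGl) :
  rmul (rmul x (f i)) (f k) = if i == k then rmul x (f i) else 0.
Proof.
rewrite rmulA; case: eqP => [<-|/eqP ik]; first by rewrite f_idem.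
by rewrite f_orth // rmul0r.
Qed.

Lemma rmul_idem_decomp (x : KGl) : x = \sum_(i < s.+1) rmul x (f i).
Proof. by rewrite -rmul_sumr f_sum rmul1. Qed.

Lemma mem_compC i x : (x \in compC f C i) = (x \in C) && (rmul x (f i) == x).
Proof.
apply/imsetP/andP => [[c Cc ->]|[Cx /eqP xfi]]; last by exists x.
case: C_submod => _ _ CM; split; first exact: CM.
by rewrite rmul_idem_proj eqxx.
Qed.

Lemma compC_block i c j : c \in compC f C i -> c j \in block f i.
Proof.
rewrite mem_compC => /andP[_ /eqP <-]; rewrite ffunE.
by apply/imsetP; exists (c j); rewrite ?f_central.
Qed.

Lemma compC0 i : 0 \in compC f C i.
Proof. by case: C_submod => C0 _ _; rewrite mem_compC C0 rmul0l eqxx. Qed.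

Lemma compCD i x y :
  x \in compC f C i -> y \in compC f C i -> x + y \in compC f C i.
Proof.
rewrite !mem_compC => /andP[Cx /eqP xf] /andP[Cy /eqP yf].
by rewrite rmulDl xf yf eqxx andbT; case: C_submod => _ CD _; apply: CD.
Qed.

Lemma compC_rmul_block i x b :
  x \in compC f C i -> b \in block f i -> rmul x b \in compC f C i.
Proof.
rewrite !mem_compC => /andP[Cx _] /imsetP[a _ ->].
rewrite rmulA gamulA -f_central -gamulA f_idem eqxx andbT.
by case: C_submod => _ _ CM; apply: CM.
Qed.

Lemma rmul_sum_compC (cs : 'I_s.+1 -> KGl) k :
  (forall i, cs i \in compC f C i) -> rmul (\sum_(i < s.+1) cs i) (f k) = cs k.
Proof.
move=> csC; have csf i : rmul (cs i) (f i) = cs i.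
  by apply/eqP; move: (csC i); rewrite mem_compC => /andP[].
rewrite rmul_suml (bigD1 k) //= big1 ?addr0; first by rewrite csf.
by move=> i ik; rewrite -csf rmul_idem_proj (negbTE ik).
Qed.

Lemma rsubmod_decomp c :
  c \in C <-> exists cs : 'I_s.+1 -> KGl,
    (forall i, cs i \in compC f C i) /\ c = \sum_(i < s.+1) cs i.
Proof.
split=> [Cc|[cs [csC ->]]].
  exists (fun i => rmul c (f i)); split; last exact: rmul_idem_decomp.
  by move=> i; apply/imsetP; exists c.
apply: rsubmod_sum => // i _.
by move: (csC i); rewrite mem_compC => /andP[].
Qed.

Lemma rsubmod_decomp_uniq (cs cs' : 'I_s.+1 -> KGl) :
  (forall i, cs i \in compC f C i) -> (forall i, cs' i \in compC f C i) ->
  \sum_(i < s.+1) cs i = \sum_(i < s.+1) cs' i -> cs = cs'.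
Proof.
move=> csC cs'C E; apply: functional_extensionality => k.
by rewrite -(rmul_sum_compC k csC) -(rmul_sum_compC k cs'C) E.
Qed.

Lemma mem_blocksum (i : 'I_s.+1) (c : KGl) j :
  (forall k : 'I_s.+1, (i < k)%N -> rmul c (f k) = 0) -> c j \in blocksum f i.
Proof.
move=> c_high; apply/imsetP; exists [ffun => c j] => //.
rewrite -[LHS]gamul1r -f_sum gamul_sumr (bigID (fun k : 'I_s.+1 => (k <= i)%N)) /=.
rewrite [X in _ + X]big1 ?addr0 => [|k].
  by apply: eq_bigr => k _; rewrite ffunE f_central.
by rewrite -ltnNge => /c_high /ffunP /(_ j); rewrite !ffunE.
Qed.

Lemma top_component_le_wtl c : c \in C -> c != 0 ->
  exists2 i, compC f C i != [set 0 : KGl] &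
    (mind (0 : KGl)%R (@rwt K gT l) (compC f C i) *
     mind (0 : KG K gT)%R (@wt K gT) (blocksum f i)
       <= wtl c)%N.
Proof.
move=> Cc c0.
have [i0 ci0] : exists i0, rmul c (f i0) != 0.
  apply/existsP; apply: contraNT c0 => /existsPn ci0.
  by rewrite [c]rmul_idem_decomp big1 // => i _; exact/eqP/negPn/ci0.
have [i ci i_max] := @arg_maxnP _ i0 (fun k => rmul c (f k) != 0) val ci0.
have ciC : rmul c (f i) \in compC f C i by apply/imsetP; exists c.
exists i.
  by apply: contraNneq ci => CiE; move: ciC; rewrite CiE in_set1.
set d := mind _ _ (blocksum f i).
apply: (@leq_trans (rwt (rmul c (f i)) * d)).
  by rewrite leq_mul2r (mind_le _ ciC ci) orbT.
apply: rwt_mul_le_wtl => j cij; apply: mind_le.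
  apply: mem_blocksum => k ik; apply/eqP; apply: contraTT ik => /i_max.
  by rewrite -leqNgt.
by apply: contraNneq cij; rewrite ffunE => ->; rewrite gamul0l eqxx.
Qed.

End BlockDecomposition.

Theorem theorem4p2 (K : finFieldType) (gT : finGroupType) (s l : nat)
  (f : 'I_s.+1 -> KG K gT)
  (hprim : forall i, primitive_central_idem (f i))
  (horth : forall i j, i != j -> gamul (f i) (f j) = 0)
  (hsum : \sum_(i < s.+1) f i = gaone K gT)
  (hl : (1 <= l)%N)
  (C : {set {ffun 'I_l -> KG K gT}})
  (hC : rsubmod C) :
  (* (a) *)
  ((forall i : 'I_s.+1,
      (forall c, c \in compC f C i -> forall j, c j \in block f i) /\
      [/\ 0 \in compC f C i,
          forall x y, x \in compC f C i -> y \in compC f C i ->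
            x + y \in compC f C i &
          forall x b, x \in compC f C i -> b \in block f i ->
            rmul x b \in compC f C i]) /\
   (forall c, c \in C <->
      exists cs : 'I_s.+1 -> {ffun 'I_l -> KG K gT},
        (forall i, cs i \in concat (compC f C i)) /\ c = \sum_(i < s.+1) cs i) /\
   (forall cs cs' : 'I_s.+1 -> {ffun 'I_l -> KG K gT},
      (forall i, cs i \in concat (compC f C i)) ->
      (forall i, cs' i \in concat (compC f C i)) ->
      \sum_(i < s.+1) cs i = \sum_(i < s.+1) cs' i -> cs = cs'))
  /\
  (* (b) *)
  ((forall i j : 'I_s.+1, (i <= j)%N ->
      (mind (0%R : KG K gT) (@wt K gT) (block f i) <= mind (0%R : KG K gT) (@wt K gT) (block f j))%N) ->
   C != [set 0%R : {ffun 'I_l -> KG K gT}] ->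
   (\big[minn/ (l * #|gT|)%N]_(i < s.+1 | compC f C i != [set 0%R : {ffun 'I_l -> KG K gT}])
        (mind (0%R : {ffun 'I_l -> KG K gT}) (@rwt K gT l) (compC f C i) *
         mind (0%R : KG K gT) (@wt K gT) (blocksum f i))
      <= mind (0%R : {ffun 'I_l -> KG K gT}) (@wtl K gT l) C)%N).
Proof.
have f_central i : central (f i) by case: (hprim i).
have f_idem i : idem (f i) by case: (hprim i).
have concatE : @concat K gT l = id.
  by apply: functional_extensionality => X; apply: concat_id.
rewrite concatE; split.
  split=> [i|]; first split=> [c cC j|].
  - by apply: compC_block cC.
  - by split=> [|x y|x b]; [apply: compC0 | apply: compCD | apply: compC_rmul_block].
  by split=> [c|cs cs']; [apply: rsubmod_decomp | apply: rsubmod_decomp_uniq].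
(* The bound holds for any order of the blocks. *)
move=> _ CN0; have [c0 Cc0 c0N0] := rsubmod_nonzero hC CN0.
apply: (le_mind Cc0 c0N0) => c Cc cN0.
have [i CiN0 le_wt] := top_component_le_wtl f_central hsum Cc cN0.
by apply: leq_trans le_wt; apply: bigminn_le.
Qed.
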